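(* For each integer $n>1$, there exists a connected $(3n-2)$-regular integral graph with $6n$ vertices.
   Context: A graph is integral if all eigenvalues of its adjacency matrix are integers. *)

From mathcomp Require Import all_boot all_order all_algebra all_field.
Set Implicit Arguments. Unset Strict Implicit. Unset Printing Implicit Defensive.
Import Order.TTheory GRing.Theory Num.Theory.
Local Open Scope ring_scope.

Definition simple_graph (V : finType) (e : rel V) : Prop :=
  symmetric e /\ irreflexive e.

Definition graph_connected (V : finType) (e : rel V) : Prop :=
  forall x y : V, connect e x y.

Definition regular (V : finType) (e : rel V) (k : nat) : Prop :=
  forall x : V, #|[set y | e x y]| = k.

Definition adjmx (N : nat) (e : rel 'I_N) : 'M[algC]_N :=
  \matrix_(i, j) (e i j)%:R.

Definition integral_graph (N : nat) (e : rel 'I_N) : Prop :=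
  forall a : algC, eigenvalue (adjmx e) a -> a \is a Num.int.

From mathcomp Require Import all_boot all_order all_algebra all_field ring.
Set Implicit Arguments. Unset Strict Implicit. Unset Printing Implicit Defensive.
Import Order.TTheory GRing.Theory Num.Theory.

(* The graph is the bipartite double of the graph [H] on ['I_3 * 'I_n] in which
   [(t, i)] and [(t', j)] are adjacent iff [i != j] or [t = t'] (so [H] has a
   loop at every vertex); its adjacency matrix is [J - (J_3 - 1) (x) 1_n].
   Summing an eigenvector of [H] over the fibres [{(t, i) | t}] and then over
   everything shows that the eigenvalues of [H] are [3n - 2], [-2] and [1], and
   those of the bipartite double are these and their negatives.  Since [H] is
   reflexive and any two of its vertices have a common neighbour, the double is
   connected. *)

Local Open Scope ring_scope.

Lemma sum_pair (R : nmodType) (I J : finType) (F : I * J -> R) :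
  \sum_p F p = \sum_i \sum_j F (i, j).
Proof. by rewrite pair_bigA; apply: eq_bigr => -[]. Qed.

Lemma sum_delta (V : finType) (w : V -> algC) x : \sum_z w z * (z == x)%:R = w x.
Proof.
by rewrite (bigD1 x) //= eqxx mulr1 big1 ?addr0 // => z /negbTE->; rewrite mulr0.
Qed.

Section Relabel.

Variables (V : finType) (N : nat) (cardV : #|V| = N).

Definition vertex_of (x : 'I_N) : V := enum_val (cast_ord (esym cardV) x).
Definition index_of (v : V) : 'I_N := cast_ord cardV (enum_rank v).

Lemma vertex_ofK : cancel vertex_of index_of.
Proof. by move=> x; rewrite /vertex_of /index_of enum_valK cast_ordKV. Qed.

Lemma index_ofK : cancel index_of vertex_of.
Proof. by move=> v; rewrite /vertex_of /index_of cast_ordK enum_rankK. Qed.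

Definition relabel (e : rel V) : rel 'I_N :=
  fun x y => e (vertex_of x) (vertex_of y).

Variable e : rel V.

Lemma relabel_simple : simple_graph e -> simple_graph (relabel e).
Proof. by case=> e_sym e_irr; split=> [x y | x]; [apply: e_sym | apply: e_irr]. Qed.

Lemma relabel_connect u v :
  connect e u v -> connect (relabel e) (index_of u) (index_of v).
Proof.
move=> /connectP[p e_p ->]; apply/connectP; exists (map index_of p).
  by apply: homo_path e_p => x y; rewrite /relabel /= !index_ofK.
by rewrite last_map.
Qed.

Lemma relabel_connected : graph_connected e -> graph_connected (relabel e).
Proof. by move=> e_conn x y; rewrite -[x]vertex_ofK -[y]vertex_ofK relabel_connect. Qed.

Lemma relabel_regular k : regular e k -> regular (relabel e) k.
Proof.
move=> e_reg x; rewrite -(e_reg (vertex_of x)).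
rewrite -(card_imset _ (can_inj index_ofK)); apply: eq_card => y.
rewrite inE /relabel /=; apply/idP/imsetP => [e_xy | [v]].
  by exists (vertex_of y); rewrite ?inE ?vertex_ofK.
by rewrite inE => e_xv ->; rewrite index_ofK.
Qed.

End Relabel.

Definition graph_eigenvalue (V : finType) (e : rel V) (a : algC) : Prop :=
  exists2 w : V -> algC, exists u, w u != 0 &
    forall u, \sum_z w z * (e z u)%:R = a * w u.

Lemma relabel_eigenvalue (V : finType) N (cardV : #|V| = N) (e : rel V) a :
  eigenvalue (adjmx (relabel cardV e)) a -> graph_eigenvalue e a.
Proof.
case/eigenvalueP=> v v_eig v_nz; exists (fun z => v 0 (index_of cardV z)).
  have [x v_x] : exists x, v 0 x != 0.
    apply/existsP; apply: contraNT v_nz; rewrite negb_exists => /forallP v0.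
    by apply/eqP/rowP => x; rewrite mxE; apply/eqP/negbNE.
  by exists (vertex_of cardV x); rewrite vertex_ofK.
move=> u; have := congr1 (fun M : 'M_(1, N) => M 0 (index_of cardV u)) v_eig.
rewrite !mxE => <-; rewrite (reindex (index_of cardV)) /=.
  by apply: eq_bigr => z _; rewrite /adjmx mxE /relabel /= !index_ofK.
exact: onW_bij (Bijective (index_ofK cardV) (vertex_ofK cardV)).
Qed.

Section BipartiteDouble.

Variables (X : finType) (h : rel X).

Definition bipartite_double : rel (bool * X) :=
  fun u v => (u.1 != v.1) && h u.2 v.2.

Lemma bipartite_double_simple : symmetric h -> simple_graph bipartite_double.
Proof.
move=> h_sym; split=> [[b x] [c y] | [b x]]; rewrite /bipartite_double /= ?eqxx //.
by rewrite eq_sym h_sym.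
Qed.

Lemma bipartite_double_regular k : regular h k -> regular bipartite_double k.
Proof.
move=> h_reg [b x]; have pair_inj : injective (pair (~~ b) : X -> bool * X).
  by move=> y z [].
rewrite -(h_reg x) -(card_imset _ pair_inj); apply: eq_card => -[c y].
rewrite !inE /bipartite_double /=; apply/idP/imsetP => [/andP[c_b h_xy] | [z]].
  by exists y; rewrite ?inE //; case: b c c_b {h_xy pair_inj} => -[].
by rewrite inE => h_xz [-> ->]; case: b {pair_inj}.
Qed.

Lemma bipartite_double_connected :
  reflexive h -> (forall x y, exists z, h x z && h z y) ->
  graph_connected bipartite_double.
Proof.
move=> h_refl h_common.
have same_side b x y : connect bipartite_double (b, x) (b, y).
  have [z /andP[h_xz h_zy]] := h_common x y.
  apply: (connect_trans (y := (~~ b, z))); apply: connect1;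
    by rewrite /bipartite_double /= ?h_xz ?h_zy; case: b.
move=> [b x] [c y]; have [<- | c_b] := eqVneq b c; first exact: same_side.
apply: (connect_trans (y := (c, x)) _ (same_side _ _ _)); apply: connect1.
by rewrite /bipartite_double /= h_refl c_b.
Qed.

Lemma bipartite_double_eigenvalue a :
  graph_eigenvalue bipartite_double a -> graph_eigenvalue h a \/ graph_eigenvalue h (- a).
Proof.
case=> w [[b u0] w_u0] w_eig.
have side_eig c u : \sum_z w (~~ c, z) * (h z u)%:R = a * w (c, u).
  rewrite -w_eig sum_pair big_bool.
  case: c; rewrite /bipartite_double /=; [|rewrite [in RHS]addrC];
    by rewrite [X in _ = X + _]big1 ?add0r // => z _; rewrite mulr0.
pose wS z := w (true, z) + w (false, z); pose wD z := w (true, z) - w (false, z).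
have : (wS u0 != 0) || (wD u0 != 0).
  apply: contraNT w_u0; rewrite negb_or !negbK => /andP[/eqP S0 /eqP D0].
  have w2 : w (b, u0) *+ 2 = if b then wS u0 + wD u0 else wS u0 - wD u0.
    by case: b; rewrite /wS /wD; ring.
  by move: w2; rewrite S0 D0 subr0 addr0 if_same => /eqP; rewrite mulrn_eq0.
case/orP=> [wS_u0 | wD_u0].
- left; exists wS => [|u]; first by exists u0.
  rewrite /wS mulrDr -(side_eig true) -(side_eig false) -big_split /=.
  by apply: eq_bigr => z _; rewrite mulrDl addrC.
- right; exists wD => [|u]; first by exists u0.
  rewrite /wD mulNr mulrBr -(side_eig true) -(side_eig false) opprB -sumrB.
  by apply: eq_bigr => z _; rewrite mulrBl.
Qed.

End BipartiteDouble.

Section FibreComplement.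

Variables T I : finType.

Definition fibre_complement : rel (T * I) := fun x y => (x.2 != y.2) || (x.1 == y.1).

Local Notation h := fibre_complement.

Lemma fibre_complement_sym : symmetric h.
Proof. by move=> x y; rewrite /fibre_complement eq_sym [x.1 == _]eq_sym. Qed.

Lemma fibre_complement_refl : reflexive h.
Proof. by move=> x; rewrite /fibre_complement !eqxx orbT. Qed.

Lemma fibre_complement_common_neighbour :
  (1 < #|I|)%N -> forall x y, exists z, h x z && h z y.
Proof.
move=> /card_gt1P[m1 [m2 [_ _ m12]]] [t i] [t' j].
have [m m_i] : exists m, m != i.
  by case: (eqVneq m1 i) => [<-|]; [exists m2; rewrite eq_sym | exists m1].
by exists (t', m); rewrite /fibre_complement /= eq_sym m_i eqxx orbT.
Qed.

Lemma fibre_complement_regular : regular h (#|T| * (#|I|).-1 + 1)%N.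
Proof.
move=> [t i]; have -> : [set y | h (t, i) y] = (t, i) |: setX [set: T] [set~ i].
  apply/setP => -[t' j]; rewrite !inE /h /= xpair_eqE (eq_sym j) (eq_sym t').
  by case: (i == j); rewrite /= ?andbT ?orbF ?orbT.
by rewrite cardsU1 cardsX cardsT cardsC1 !inE eqxx andbF addnC.
Qed.

Lemma fibre_complement_eigenvalue a : graph_eigenvalue h a ->
  [\/ a = (#|T| * #|I|)%:R - #|T|%:R + 1, a = 1 - #|T|%:R | a = 1].
Proof.
case=> w [x0 w_x0] w_eig.
pose fibre i := \sum_t w (t, i); pose total := \sum_z w z.
have adj_entry z x : (h z x)%:R = 1 - (z.2 == x.2)%:R + (z == x)%:R :> algC.
  case: z x => [t i] [t' j]; rewrite /fibre_complement xpair_eqE /=.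
  by case: (i == j); case: (t == t'); rewrite /=; ring.
have eig_pt x : a * w x = total - fibre x.2 + w x.
  rewrite -w_eig; under eq_bigr => z _ do rewrite adj_entry mulrDr mulrBr mulr1.
  rewrite big_split sumrB /= sum_delta; congr (_ - _ + _).
  by rewrite sum_pair; apply: eq_bigr => t _; rewrite sum_delta.
have eig_fibre i : a * fibre i = (total - fibre i) *+ #|T| + fibre i.
  rewrite /fibre mulr_sumr; under eq_bigr => t _ do rewrite eig_pt /=.
  by rewrite big_split sumr_const.
have eig_total : a * total = (total *+ #|I| - total) *+ #|T| + total.
  have total_fibres : total = \sum_i fibre i by rewrite /total sum_pair exchange_big.
  rewrite {1}total_fibres mulr_sumr; under eq_bigr => i _ do rewrite eig_fibre.
  by rewrite big_split /= sumrMnl sumrB sumr_const -total_fibres.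
have [total0 | total_nz] := eqVneq total 0; last first.
  apply: Or31; apply: (mulIf total_nz).
  rewrite eig_total -[_ *+ #|T|]mulr_natr -[_ *+ #|I|]mulr_natr natrM.
  by ring.
have [i fibre_i | fibre0] := pickP (fun i => fibre i != 0).
  apply: Or32; apply: (mulIf fibre_i); rewrite eig_fibre total0 -[_ *+ #|T|]mulr_natr.
  by ring.
apply: Or33; apply: (mulIf w_x0); rewrite mul1r eig_pt total0.
by have /negbFE/eqP -> := fibre0 x0.2; rewrite subr0 add0r.
Qed.

Lemma fibre_complement_integral a : graph_eigenvalue h a -> a \is a Num.int.
Proof.
case/fibre_complement_eigenvalue=> ->;
  by rewrite ?(rpredB, rpredD, rpredN, rpred_nat, rpred1).
Qed.

End FibreComplement.

Theorem corollary4p6 (n : nat) : (1 < n)%N ->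
  exists e : rel 'I_(6 * n),
    [/\ simple_graph e, graph_connected e, regular e (3 * n - 2) & integral_graph e].
Proof.
move=> n_gt1.
have cardV : #|{: bool * ('I_3 * 'I_n)}| = (6 * n)%N.
  by rewrite !card_prod card_bool !card_ord mulnA.
exists (relabel cardV (bipartite_double (@fibre_complement 'I_3 'I_n))); split.
- exact/relabel_simple/bipartite_double_simple/fibre_complement_sym.
- apply/relabel_connected/bipartite_double_connected; first exact: fibre_complement_refl.
  by apply: fibre_complement_common_neighbour; rewrite card_ord.
- have -> : (3 * n - 2 = #|'I_3| * #|'I_n|.-1 + 1)%N.
    by case: n n_gt1 {cardV} => [|[|m]] // _; rewrite !card_ord (mulnSr 3 m.+1) -addnBA.
  exact/relabel_regular/bipartite_double_regular/fibre_complement_regular.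
- move=> a /relabel_eigenvalue /bipartite_double_eigenvalue[];
    by move/fibre_complement_integral; rewrite ?rpredN.
Qed.
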